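(* For every max-min (unbounded space) algorithm $ALG$ for the classic bin packing problem and every positive integer $m$, there exists a sorted item sequence $I$ such that $OPT(I)>m$ and $ALG(I)>\frac{16}{15}\cdot(OPT(I)-1)$.
   Context: Classic bin packing: an item sequence $I=(a_1,\dots,a_n)\in(0,1]^n$ must be packed into bins of capacity $1$; $OPT(I)$ is the minimum number of non-empty bins, $ALG(I)$ the number of non-empty bins used by $ALG$. $I$ is sorted if $a_1\ge\cdots\ge a_n$. A max-min algorithm first sorts the input in non-increasing order and then repeatedly takes either the head (largest) or the tail (smallest) item of the currently remaining sorted sequence and packs it into some bin (any bin it can fit into, there being no limit on the number of open bins), each decision depending only on the items already packed and the current head and tail items, without seeing any other remaining items (in particular, not how many items remain). *)

From Stdlib Require Import Reals List Arith Lia Sorting.Sorted.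
Open Scope R_scope.

Definition bin_load (I : list R) (f : nat -> nat) (b : nat) : R :=
  fold_right (fun j acc => (if Nat.eqb (f j) b then nth j I 0 else 0) + acc)
             0 (seq 0 (length I)).

Definition feasible (I : list R) (k : nat) : Prop :=
  exists f : nat -> nat,
    (forall j, (j < length I)%nat -> (f j < k)%nat) /\
    (forall b, (b < k)%nat -> bin_load I f b <= 1).

Definition is_OPT (I : list R) (k : nat) : Prop :=
  feasible I k /\ forall k', feasible I k' -> (k <= k')%nat.

(** History of the packing so far, in chronological order:
    (size of packed item, index of the bin it went to).
    Bins are numbered 0,1,2,... in order of opening. *)
Definition history := list (R * nat).

Definition nbins (h : history) : nat :=
  fold_right (fun p acc => Nat.max (S (snd p)) acc) 0%nat h.

Definition load (h : history) (i : nat) : R :=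
  fold_right (fun p acc => (if Nat.eqb (snd p) i then fst p else 0) + acc) 0 h.

(** A max-min algorithm: given the history of packed items, the current head
    (largest remaining) and the current tail (smallest remaining) item, it
    decides whether to pack the head ([true]) or the tail ([false]) and into
    which bin: an index [< nbins h] designates an existing bin, any other
    index means "open a new bin". *)
Definition maxmin_alg := history -> R -> R -> bool * nat.

Definition chosen (d : bool * nat) (a t : R) : R := if fst d then a else t.

Definition valid_alg (A : maxmin_alg) : Prop :=
  forall (h : history) (a t : R),
    (snd (A h a t) < nbins h)%nat ->
    load h (snd (A h a t)) + chosen (A h a t) a t <= 1.

Fixpoint run (A : maxmin_alg) (fuel : nat) (r : list R) (h : history) : history :=
  match fuel with
  | O => h
  | S fuel' =>
    match r with
    | nil => h
    | a :: _ =>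
      let t := last r 0 in
      let d := A h a t in
      let it := chosen d a t in
      let r' := if fst d then tl r else removelast r in
      let bin := if Nat.ltb (snd d) (nbins h) then snd d else nbins h in
      run A fuel' r' (h ++ (it, bin) :: nil)
    end
  end.

(** ALG(I): number of (non-empty) bins used; the input is sorted first,
    here I is assumed already sorted non-increasingly. *)
Definition ALG (A : maxmin_alg) (I : list R) : nat :=
  nbins (run A (length I) I nil).

Definition sorted_input (I : list R) : Prop := Sorted Rge I.
Definition valid_items (I : list R) : Prop := Forall (fun x => 0 < x <= 1) I.

From Stdlib Require Import Reals List Arith Lia Lra Permutation Sorting.Sorted Classical Wf_nat.
Open Scope R_scope.

(* The items have sizes 2/5 (big), 7/20 (medium) and 3/10 (small), i.e. 8, 7 and 6 twentieths.
   For T rounds the adversary shows the algorithm the head 2/5 and the tail 3/10.  A max-min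
   algorithm sees nothing else, so after these rounds it has packed the same x bigs and y smalls
   into the same K bins on every sorted input big^(x+1) medium^r small^(y+1+q).  Three such
   inputs are compared: (a) nothing more, (b) smalls up to 2(x+1) when y <= 2x+1, (c) 2(y+1)
   mediums.  A prefix bin with b bigs and s smalls has room for only (20-8b-6s)/6 more smalls and
   (20-8b-6s)/7 more mediums, so the rest of (b) and (c) needs new bins.  If ALG <= 16/15 (OPT-1)
   held on all three inputs, their sum with weights 1, 2, 1 (or 1, 0, 1 when y > 2x+1) would
   demand more of the prefix bins than any possible bin content can give. *)

(** * Item sizes and inputs *)

Definition big : R := 2/5.
Definition medium : R := 7/20.
Definition small : R := 3/10.

Definition items (p r q : nat) : list R :=
  repeat big p ++ repeat medium r ++ repeat small q.

Ltac decide_sizes :=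
  repeat match goal with |- context [Req_dec_T ?a ?b] => destruct (Req_dec_T a b) end;
  unfold big, medium, small in *; try (exfalso; lra); try lra; try lia.

Lemma count_occ_repeat_dec (a : R) n z :
  count_occ Req_dec_T (repeat a n) z = if Req_dec_T a z then n else 0%nat.
Proof.
  destruct (Req_dec_T a z).
  - now apply count_occ_repeat_eq.
  - now apply count_occ_repeat_neq.
Qed.

Lemma count_occ_items p r q z :
  count_occ Req_dec_T (items p r q) z =
  ((if Req_dec_T big z then p else 0) + (if Req_dec_T medium z then r else 0)
   + (if Req_dec_T small z then q else 0))%nat.
Proof. unfold items. rewrite !count_occ_app, !count_occ_repeat_dec. lia. Qed.

Lemma count_items_big p r q : count_occ Req_dec_T (items p r q) big = p.
Proof. rewrite count_occ_items. decide_sizes. Qed.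

Lemma count_items_medium p r q : count_occ Req_dec_T (items p r q) medium = r.
Proof. rewrite count_occ_items. decide_sizes. Qed.

Lemma count_items_small p r q : count_occ Req_dec_T (items p r q) small = q.
Proof. rewrite count_occ_items. decide_sizes. Qed.

Lemma length_items p r q : length (items p r q) = (p + r + q)%nat.
Proof. unfold items. rewrite !length_app, !repeat_length. lia. Qed.

Lemma valid_items_items p r q : valid_items (items p r q).
Proof.
  unfold valid_items, items. rewrite !Forall_app.
  repeat split; apply Forall_forall; intros a Ha; apply repeat_spec in Ha; subst a;
    unfold big, medium, small; lra.
Qed.

Lemma sorted_repeat_app (a : R) n l :
  Sorted Rge l -> (forall z, In z l -> z <= a) -> Sorted Rge (repeat a n ++ l).
Proof.
  intros Hl Hz. induction n as [|n IH]; [exact Hl|].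
  constructor; [exact IH|]. destruct n as [|n].
  - destruct l as [|b l]; constructor. apply Rle_ge, Hz. now left.
  - constructor. apply Rge_refl.
Qed.

Lemma sorted_items p r q : sorted_input (items p r q).
Proof.
  unfold sorted_input, items.
  apply sorted_repeat_app; [apply sorted_repeat_app|].
  - rewrite <- (app_nil_r (repeat small q)). apply sorted_repeat_app; [constructor|easy].
  - intros z Hz. apply repeat_spec in Hz. subst. unfold small, medium. lra.
  - intros z Hz. apply in_app_or in Hz.
    destruct Hz as [Hz|Hz]; apply repeat_spec in Hz; subst; unfold big, medium, small; lra.
Qed.

(** * Histories and bins *)

Lemma load_app h1 h2 i : load (h1 ++ h2) i = load h1 i + load h2 i.
Proof. induction h1 as [|e h1 IH]; simpl; [ring|]. unfold load in *. simpl. rewrite IH. ring. Qed.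

Lemma nbins_cons e h : nbins (e :: h) = Nat.max (S (snd e)) (nbins h).
Proof. reflexivity. Qed.

Lemma nbins_app h1 h2 : nbins (h1 ++ h2) = Nat.max (nbins h1) (nbins h2).
Proof.
  induction h1 as [|e h1 IH]; [reflexivity|].
  rewrite <- app_comm_cons, !nbins_cons, IH. lia.
Qed.

Lemma nbins_gt h e : In e h -> (snd e < nbins h)%nat.
Proof.
  induction h as [|e' h IH]; [contradiction|]. rewrite nbins_cons.
  intros [<-|He]; [lia|]. specialize (IH He). lia.
Qed.

Definition sumR (l : list R) : R := fold_right Rplus 0 l.

Definition bin_contents (h : history) (i : nat) : list R :=
  map fst (filter (fun e => Nat.eqb (snd e) i) h).

Definition count_item (h : history) (z : R) : nat := count_occ Req_dec_T (map fst h) z.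

Definition bin_count (h : history) (z : R) (i : nat) : nat :=
  count_occ Req_dec_T (bin_contents h i) z.

Lemma load_bin_contents h i : load h i = sumR (bin_contents h i).
Proof.
  induction h as [|[a b] h IH]; [reflexivity|].
  unfold load, bin_contents in *. simpl. rewrite IH.
  destruct (Nat.eqb b i); simpl; ring.
Qed.

Lemma bin_contents_absent h i : (forall e, In e h -> snd e <> i) -> bin_contents h i = nil.
Proof.
  induction h as [|e h IH]; intros H; [reflexivity|].
  unfold bin_contents in *. simpl.
  destruct (Nat.eqb_spec (snd e) i) as [E|_]; [now destruct (H e (or_introl eq_refl))|].
  apply IH. intros e' He'. apply H. now right.
Qed.

Lemma bin_contents_beyond h i : (nbins h <= i)%nat -> bin_contents h i = nil.
Proof.
  intros Hi. apply bin_contents_absent. intros e He. pose proof (nbins_gt h e He). lia.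
Qed.

Lemma load_absent h i : (forall e, In e h -> snd e <> i) -> load h i = 0.
Proof. intros H. now rewrite load_bin_contents, bin_contents_absent. Qed.

Lemma load_beyond h i : (nbins h <= i)%nat -> load h i = 0.
Proof. intros Hi. now rewrite load_bin_contents, bin_contents_beyond. Qed.

Lemma count_item_app h1 h2 z :
  count_item (h1 ++ h2) z = (count_item h1 z + count_item h2 z)%nat.
Proof. unfold count_item. now rewrite map_app, count_occ_app. Qed.

Lemma count_item_perm h l z :
  Permutation (map fst h) l -> count_item h z = count_occ Req_dec_T l z.
Proof. intros Hperm. now apply Permutation_count_occ. Qed.

Lemma bin_count_app h1 h2 z i :
  bin_count (h1 ++ h2) z i = (bin_count h1 z i + bin_count h2 z i)%nat.
Proof. unfold bin_count, bin_contents. now rewrite filter_app, map_app, count_occ_app. Qed.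

Lemma bin_count_beyond h z i : (nbins h <= i)%nat -> bin_count h z i = 0%nat.
Proof. intros Hi. unfold bin_count. now rewrite bin_contents_beyond. Qed.

Lemma bin_count_cons e h z i :
  bin_count (e :: h) z i =
  ((if Nat.eqb (snd e) i then if Req_dec_T (fst e) z then 1 else 0 else 0) + bin_count h z i)%nat.
Proof.
  unfold bin_count, bin_contents. simpl.
  destruct (Nat.eqb (snd e) i); simpl; [destruct (Req_dec_T (fst e) z)|]; reflexivity.
Qed.

Lemma sumR_ge_sizes l : Forall (fun a => 0 <= a) l ->
  big * INR (count_occ Req_dec_T l big) + medium * INR (count_occ Req_dec_T l medium)
  + small * INR (count_occ Req_dec_T l small) <= sumR l.
Proof.
  induction 1 as [|a l Ha _ IH]; [simpl; lra|].
  unfold sumR in *. simpl.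
  destruct (Req_dec_T a big), (Req_dec_T a medium), (Req_dec_T a small);
    subst; rewrite ?S_INR; decide_sizes.
Qed.

Lemma bin_capacity h i : (forall e, In e h -> 0 <= fst e) -> load h i <= 1 ->
  (8 * bin_count h big i + 7 * bin_count h medium i + 6 * bin_count h small i <= 20)%nat.
Proof.
  intros Hpos Hload. rewrite load_bin_contents in Hload.
  assert (Hc : Forall (fun a => 0 <= a) (bin_contents h i)).
  { apply Forall_forall. intros a Ha. unfold bin_contents in Ha.
    apply in_map_iff in Ha. destruct Ha as [e [<- He]].
    apply filter_In in He. apply Hpos, He. }
  pose proof (sumR_ge_sizes _ Hc) as Hsum. unfold bin_count.
  apply INR_le. rewrite !plus_INR, !mult_INR.
  simpl (INR 20). simpl (INR 8). simpl (INR 7). simpl (INR 6).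
  unfold big, medium, small in *. lra.
Qed.

Fixpoint sum_bins (K : nat) (g : nat -> nat) : nat :=
  match K with O => O | S K' => (sum_bins K' g + g K')%nat end.

Lemma sum_bins_le K f g : (forall i, (i < K)%nat -> (f i <= g i)%nat) ->
  (sum_bins K f <= sum_bins K g)%nat.
Proof.
  induction K as [|K IH]; intros H; simpl; [lia|].
  pose proof (H K (Nat.lt_succ_diag_r K)). enough (sum_bins K f <= sum_bins K g)%nat by lia.
  apply IH. intros i Hi. apply H. lia.
Qed.

Lemma sum_bins_le_const K g c : (forall i, (i < K)%nat -> (g i <= c)%nat) ->
  (sum_bins K g <= c * K)%nat.
Proof.
  induction K as [|K IH]; intros H; simpl; [lia|].
  pose proof (H K (Nat.lt_succ_diag_r K)). enough (sum_bins K g <= c * K)%nat by lia.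
  apply IH. intros i Hi. apply H. lia.
Qed.

Lemma sum_bins_add K f g :
  sum_bins K (fun i => f i + g i)%nat = (sum_bins K f + sum_bins K g)%nat.
Proof. induction K; simpl; lia. Qed.

Lemma sum_bins_scale K c g : sum_bins K (fun i => c * g i)%nat = (c * sum_bins K g)%nat.
Proof. induction K; simpl; lia. Qed.

Lemma sum_bins_zero K g : (forall i, (i < K)%nat -> g i = 0%nat) -> sum_bins K g = 0%nat.
Proof.
  induction K as [|K IH]; intros H; [reflexivity|]. simpl.
  rewrite IH by (intros; apply H; lia). rewrite H by lia. reflexivity.
Qed.

Lemma sum_bins_indicator K j c : (j < K)%nat ->
  sum_bins K (fun i => if Nat.eqb j i then c else 0%nat) = c.
Proof.
  induction K as [|K IH]; intros Hj; [lia|]. simpl.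
  destruct (Nat.eqb_spec j K) as [<-|Hne].
  - rewrite sum_bins_zero; [lia|]. intros i Hi. destruct (Nat.eqb_spec j i); [lia|reflexivity].
  - rewrite IH by lia. lia.
Qed.

Lemma sum_bins_beyond K K' g c : (K <= K')%nat -> (forall i, (K <= i)%nat -> g i = c) ->
  sum_bins K' g = (sum_bins K g + (K' - K) * c)%nat.
Proof.
  intros HK Hg. induction K' as [|K' IH]; [replace K with 0%nat by lia; reflexivity|].
  destruct (Nat.eq_dec K (S K')) as [<-|Hne]; [rewrite Nat.sub_diag; lia|].
  cbn [sum_bins]. rewrite IH, Hg by lia.
  replace (S K' - K)%nat with (S (K' - K)) by lia. rewrite Nat.mul_succ_l. lia.
Qed.

Lemma sum_bins_ext K f g : (forall i, (i < K)%nat -> f i = g i) -> sum_bins K f = sum_bins K g.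
Proof.
  induction K as [|K IH]; intros H; [reflexivity|]. simpl.
  rewrite IH by (intros; apply H; lia). rewrite H by lia. reflexivity.
Qed.

Lemma sum_bins_count h z K : (forall e, In e h -> (snd e < K)%nat) ->
  sum_bins K (bin_count h z) = count_item h z.
Proof.
  induction h as [|e h IH]; intros H.
  - now apply sum_bins_zero.
  - rewrite (sum_bins_ext _ _ _ (fun i _ => bin_count_cons e h z i)), sum_bins_add.
    rewrite sum_bins_indicator by (apply H; now left).
    rewrite IH by (intros; apply H; now right).
    unfold count_item. simpl. destruct (Req_dec_T (fst e) z); reflexivity.
Qed.

(** * Feasible packings *)

Lemma map_nth_seq {T} (L : list T) (d : T) : map (fun j => nth j L d) (seq 0 (length L)) = L.
Proof.
  induction L as [|a L IH]; [reflexivity|].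
  cbn [length seq map]. simpl nth at 1. f_equal.
  rewrite <- seq_shift, map_map. exact IH.
Qed.

Lemma load_map (g : nat -> R * nat) l b :
  load (map g l) b =
  fold_right (fun j acc => (if Nat.eqb (snd (g j)) b then fst (g j) else 0) + acc) 0 l.
Proof. induction l as [|j l IH]; [reflexivity|]. unfold load in *. simpl. now rewrite IH. Qed.

Lemma bin_load_history L b :
  bin_load (map fst L) (fun j => snd (nth j L (0, 0%nat))) b = load L b.
Proof.
  unfold bin_load. rewrite length_map.
  transitivity (load (map (fun j => nth j L (0, 0%nat)) (seq 0 (length L))) b);
    [|now rewrite map_nth_seq].
  induction (seq 0 (length L)) as [|j l IH]; [reflexivity|].
  simpl. rewrite IH. f_equal. destruct Nat.eqb; [|reflexivity].
  exact (map_nth fst L (0, 0%nat) j).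
Qed.

Lemma feasible_iff_history I k :
  feasible I k <-> exists L : history, map fst L = I /\ (forall e, In e L -> (snd e < k)%nat) /\
                                       (forall b, (b < k)%nat -> load L b <= 1).
Proof.
  split.
  - intros [f [Hf Hload]].
    exists (map (fun j => (nth j I 0, f j)) (seq 0 (length I))). split; [|split].
    + rewrite map_map. apply map_nth_seq.
    + intros e He. apply in_map_iff in He. destruct He as [j [<- Hj]].
      apply in_seq in Hj. apply Hf. lia.
    + intros b Hb. rewrite load_map. now apply Hload.
  - intros [L [<- [Hbins Hload]]].
    exists (fun j => snd (nth j L (0, 0%nat))). split.
    + intros j Hj. apply Hbins, nth_In. now rewrite length_map in Hj.
    + intros b Hb. rewrite bin_load_history. now apply Hload.
Qed.

Fixpoint label_groups (G : list (list R)) (s : nat) : history :=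
  match G with
  | nil => nil
  | g :: G' => map (fun a => (a, s)) g ++ label_groups G' (S s)
  end.

Lemma map_fst_label_groups G s : map fst (label_groups G s) = concat G.
Proof.
  revert s. induction G as [|g G IH]; intros s; [reflexivity|].
  simpl. rewrite map_app, IH, map_map. simpl. now rewrite map_id.
Qed.

Lemma label_groups_bins G s e : In e (label_groups G s) -> (s <= snd e < s + length G)%nat.
Proof.
  revert s. induction G as [|g G IH]; intros s He; [contradiction|].
  simpl in He. apply in_app_or in He. destruct He as [He|He].
  - apply in_map_iff in He. destruct He as [a [<- _]]. simpl. lia.
  - specialize (IH (S s) He). simpl. lia.
Qed.

Lemma load_label_groups G s b : Forall (fun g => sumR g <= 1) G -> load (label_groups G s) b <= 1.
Proof.
  intros HG. revert s. induction HG as [|g G Hg _ IH]; intros s; [unfold load; simpl; lra|].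
  simpl. rewrite load_app.
  assert (Hfirst : load (map (fun a => (a, s)) g) b = if Nat.eqb s b then sumR g else 0).
  { clear Hg. induction g as [|a g IHg]; unfold load, sumR in *; simpl in *;
      [now destruct Nat.eqb|].
    rewrite IHg; destruct (Nat.eqb s b); lra. }
  rewrite Hfirst. destruct (Nat.eqb_spec s b) as [<-|_].
  - rewrite load_absent; [lra|]. intros e He. pose proof (label_groups_bins _ _ _ He). lia.
  - specialize (IH (S s)). lra.
Qed.

Lemma load_perm L L' b : Permutation L L' -> load L b = load L' b.
Proof. induction 1; unfold load in *; simpl; lra. Qed.

Lemma feasible_of_groups I (G : list (list R)) :
  Forall (fun g => sumR g <= 1) G -> Permutation (concat G) I -> feasible I (length G).
Proof.
  intros HG HP. apply feasible_iff_history.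
  assert (HP' : Permutation I (map fst (label_groups G 0))).
  { rewrite map_fst_label_groups. now symmetry. }
  destruct (Permutation_map_inv _ _ HP') as [L [HI HL]].
  exists L. split; [now symmetry|split].
  - intros e He. apply (Permutation_in _ (Permutation_sym HL)), label_groups_bins in He. lia.
  - intros b _. rewrite <- (load_perm _ _ b HL). now apply load_label_groups.
Qed.

Lemma opt_exists I n : feasible I n -> exists k, is_OPT I k /\ (k <= n)%nat.
Proof.
  intros H.
  destruct (dec_inh_nat_subset_has_unique_least_element (feasible I)
              (fun n => classic (feasible I n)) (ex_intro _ n H)) as [k [[Hk Hmin] _]].
  exists k. repeat split; auto.
Qed.

Lemma feasible_items_bins p r q k : feasible (items p r q) k -> (p + r + q <= 3 * k)%nat.
Proof.
  intros [L [HL [Hbins Hload]]]%feasible_iff_history.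
  assert (Hpos : forall e, In e L -> 0 <= fst e).
  { intros e He. pose proof (valid_items_items p r q) as Hb.
    unfold valid_items in Hb. rewrite Forall_forall, <- HL in Hb.
    specialize (Hb (fst e) (in_map fst L e He)). lra. }
  assert (Hcount : forall z, sum_bins k (bin_count L z) = count_occ Req_dec_T (items p r q) z).
  { intros z. rewrite <- HL. now apply sum_bins_count. }
  assert (Hsum : (sum_bins k (fun b => bin_count L big b + bin_count L medium b
                                      + bin_count L small b) <= 3 * k)%nat).
  { apply sum_bins_le_const. intros b Hb. pose proof (bin_capacity L b Hpos (Hload b Hb)). lia. }
  rewrite !sum_bins_add, !Hcount, count_items_big, count_items_medium, count_items_small in Hsum.
  exact Hsum.
Qed.

Lemma count_occ_concat_repeat (g : list R) n z :
  count_occ Req_dec_T (concat (repeat g n)) z = (n * count_occ Req_dec_T g z)%nat.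
Proof. induction n as [|n IH]; [reflexivity|]. simpl. rewrite count_occ_app, IH. lia. Qed.

Ltac groups_permutation :=
  apply (Permutation_count_occ Req_dec_T); intros z;
  rewrite count_occ_items, ?concat_app, ?count_occ_app, ?count_occ_concat_repeat;
  cbn [concat count_occ app]; rewrite ?app_nil_r, ?count_occ_repeat_dec;
  decide_sizes.

Ltac groups_fit :=
  rewrite ?Forall_app; repeat split; try apply Forall_forall;
  try (intros g Hg; apply repeat_spec in Hg; subst g);
  unfold sumR; simpl; unfold big, medium, small; lra.

Lemma feasible_items_few_smalls X Y : (Y <= 2 * X)%nat ->
  exists n, feasible (items X 0 Y) n /\ (4 * n <= 2 * X + Y + 8)%nat.
Proof.
  intros HY.
  set (u := (Y / 2)%nat). set (e := (Y mod 2)%nat).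
  set (v := ((X - u) / 2)%nat). set (w := ((X - u) mod 2)%nat).
  assert (Hu : Y = (2 * u + e)%nat /\ (e < 2)%nat)
    by (split; [apply Nat.div_mod|apply Nat.mod_upper_bound]; lia).
  assert (Hv : (X - u)%nat = (2 * v + w)%nat /\ (w < 2)%nat)
    by (split; [apply Nat.div_mod|apply Nat.mod_upper_bound]; lia).
  set (G := repeat (big :: small :: small :: nil) u ++ repeat (small :: nil) e
            ++ repeat (big :: big :: nil) v ++ repeat (big :: nil) w).
  exists (length G). split.
  - apply feasible_of_groups; unfold G; [groups_fit|groups_permutation].
  - unfold G. rewrite !length_app, !repeat_length. lia.
Qed.

Lemma feasible_items_many_smalls X Y : (2 * X < Y)%nat ->
  exists n, feasible (items X 0 Y) n /\ (3 * n <= X + Y + 3)%nat.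
Proof.
  intros HY.
  set (u := ((Y - 2 * X) / 3)%nat). set (e := ((Y - 2 * X) mod 3)%nat).
  assert (Hu : (Y - 2 * X)%nat = (3 * u + e)%nat /\ (e < 3)%nat)
    by (split; [apply Nat.div_mod|apply Nat.mod_upper_bound]; lia).
  set (G := repeat (big :: small :: small :: nil) X ++ repeat (small :: small :: small :: nil) u
            ++ repeat small e :: nil).
  exists (length G). split.
  - apply feasible_of_groups; unfold G; [|groups_permutation].
    rewrite !Forall_app. split; [|split]; [groups_fit|groups_fit|].
    constructor; [|constructor]. destruct e as [|[|[|e]]]; [groups_fit..|lia].
  - unfold G. rewrite !length_app, !repeat_length. simpl. lia.
Qed.

Lemma feasible_items_two_smalls_per_big X : feasible (items X 0 (2 * X)) X.
Proof.
  set (G := repeat (big :: small :: small :: nil) X).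
  replace X with (length G) at 3 by apply repeat_length.
  apply feasible_of_groups; unfold G; [groups_fit|groups_permutation].
Qed.

Lemma feasible_items_mediums X Y :
  exists n, feasible (items X (2 * Y) Y) n /\ (2 * n <= 2 * Y + X + 1)%nat.
Proof.
  set (v := (X / 2)%nat). set (w := (X mod 2)%nat).
  assert (Hv : X = (2 * v + w)%nat /\ (w < 2)%nat)
    by (split; [apply Nat.div_mod|apply Nat.mod_upper_bound]; lia).
  set (G := repeat (medium :: medium :: small :: nil) Y ++ repeat (big :: big :: nil) v
            ++ repeat (big :: nil) w).
  exists (length G). split.
  - apply feasible_of_groups; unfold G; [groups_fit|groups_permutation].
  - unfold G. rewrite !length_app, !repeat_length. lia.
Qed.

Definition ratio_witness (A : maxmin_alg) (m : nat) : Prop :=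
  exists (I : list R) (k : nat),
    valid_items I /\ sorted_input I /\ is_OPT I k /\ (m < k)%nat /\
    INR (ALG A I) > 16 / 15 * (INR k - 1).

Lemma witness_or_ratio_bound A m p r q n :
  feasible (items p r q) n -> (3 * m < p + r + q)%nat ->
  ratio_witness A m \/ (15 * ALG A (items p r q) + 16 <= 16 * n)%nat.
Proof.
  intros Hn Hlen.
  destruct (opt_exists _ _ Hn) as [k [Hopt Hkn]].
  pose proof (feasible_items_bins _ _ _ _ (proj1 Hopt)).
  destruct (lt_dec (16 * k) (15 * ALG A (items p r q) + 16)) as [Hlt|Hge]; [left|right; lia].
  exists (items p r q), k. repeat split.
  - apply valid_items_items.
  - apply sorted_items.
  - apply Hopt.
  - apply Hopt.
  - lia.
  - apply lt_INR in Hlt. rewrite plus_INR, !mult_INR in Hlt.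
    simpl (INR 16) in Hlt. simpl (INR 15) in Hlt. lra.
Qed.

(** * Runs of a max-min algorithm *)

Definition target_bin (h : history) (d : bool * nat) : nat :=
  if Nat.ltb (snd d) (nbins h) then snd d else nbins h.

Lemma run_cons A fuel a r h :
  run A (S fuel) (a :: r) h =
  let t := last (a :: r) 0 in
  let d := A h a t in
  run A fuel (if fst d then r else removelast (a :: r))
      (h ++ (chosen d a t, target_bin h d) :: nil).
Proof. reflexivity. Qed.

Lemma load_place A h a t :
  valid_alg A -> (forall i, load h i <= 1) -> chosen (A h a t) a t <= 1 ->
  forall i, load (h ++ (chosen (A h a t) a t, target_bin h (A h a t)) :: nil) i <= 1.
Proof.
  intros HA Hh Hc i. rewrite load_app. unfold load at 2; simpl. unfold target_bin.
  destruct (Nat.ltb_spec (snd (A h a t)) (nbins h)) as [Hlt|Hge].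
  - destruct (Nat.eqb_spec (snd (A h a t)) i) as [<-|_]; [|specialize (Hh i); lra].
    specialize (HA h a t Hlt). lra.
  - destruct (Nat.eqb_spec (nbins h) i) as [<-|_]; [|specialize (Hh i); lra].
    rewrite load_beyond by lia. lra.
Qed.

Lemma run_packs A : valid_alg A -> forall fuel r h,
  (length r <= fuel)%nat -> Forall (fun a => a <= 1) r -> (forall i, load h i <= 1) ->
  exists new, run A fuel r h = h ++ new /\ Permutation (map fst new) r /\
              (forall i, load (h ++ new) i <= 1).
Proof.
  intros HA fuel. induction fuel as [|fuel IH]; intros r h Hlen Hr Hh.
  - destruct r; [|simpl in Hlen; lia]. exists nil. rewrite app_nil_r. auto.
  - destruct r as [|a r0].
    { exists nil. rewrite app_nil_r. auto. }
    rewrite run_cons. cbv zeta.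
    set (t := last (a :: r0) 0). set (d := A h a t).
    assert (Hsplit : a :: r0 = removelast (a :: r0) ++ t :: nil)
      by (apply app_removelast_last; discriminate).
    pose proof Hr as Hr'. rewrite Hsplit in Hr'. apply Forall_app in Hr' as [Hinit Ht].
    assert (Hc : chosen d a t <= 1)
      by (unfold chosen; destruct (fst d); [exact (Forall_inv Hr)|exact (Forall_inv Ht)]).
    pose proof (load_place A h a t HA Hh Hc) as Hh'. fold d in Hh'.
    destruct (fst d) eqn:Hd.
    + destruct (IH r0 _ ltac:(simpl in Hlen; lia) (Forall_inv_tail Hr) Hh')
        as [new [-> [Hperm Hload]]].
      rewrite <- app_assoc in Hload |- *.
      exists ((chosen d a t, target_bin h d) :: new). repeat split; [|assumption].
      unfold chosen. rewrite Hd. simpl. now apply perm_skip.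
    + assert (Hlen' : length (removelast (a :: r0)) = length r0).
      { apply (f_equal (@length R)) in Hsplit. rewrite length_app in Hsplit. simpl in *. lia. }
      destruct (IH (removelast (a :: r0)) _ ltac:(simpl in Hlen; lia) Hinit Hh')
        as [new [-> [Hperm Hload]]].
      rewrite <- app_assoc in Hload |- *.
      exists ((chosen d a t, target_bin h d) :: new). repeat split; [|assumption].
      unfold chosen. rewrite Hd. simpl. rewrite Hsplit.
      eapply Permutation_trans; [apply perm_skip, Hperm|]. apply Permutation_cons_append.
Qed.

Fixpoint prefix (A : maxmin_alg) (n : nat) : history :=
  match n with
  | O => nil
  | S n' => let h := prefix A n' in
            let d := A h big small in
            h ++ (chosen d big small, target_bin h d) :: nil
  end.

Lemma count_item_prefix_S A n :
  let d := A (prefix A n) big small in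
  count_item (prefix A (S n)) big = (count_item (prefix A n) big + if fst d then 1 else 0)%nat /\
  count_item (prefix A (S n)) small = (count_item (prefix A n) small + if fst d then 0 else 1)%nat.
Proof.
  cbn [prefix]. rewrite !count_item_app. unfold count_item, chosen. simpl.
  destruct fst; split; decide_sizes.
Qed.

Lemma prefix_sizes A n e : In e (prefix A n) -> fst e = big \/ fst e = small.
Proof.
  induction n as [|n IH]; [contradiction|]. cbn [prefix].
  intros [He|[<-|[]]]%in_app_or; [now apply IH|].
  unfold chosen. simpl. destruct fst; auto.
Qed.

Lemma prefix_count A n : (count_item (prefix A n) big + count_item (prefix A n) small)%nat = n.
Proof.
  induction n as [|n IH]; [reflexivity|].
  destruct (count_item_prefix_S A n) as [-> ->]. destruct fst; lia.
Qed.

Lemma prefix_load A n : valid_alg A -> forall i, load (prefix A n) i <= 1.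
Proof.
  intros HA. induction n as [|n IH]; [intros; unfold load; simpl; lra|].
  cbn [prefix]. apply load_place; [assumption..|].
  unfold chosen. destruct fst; unfold big, small; lra.
Qed.

Lemma run_prefix_step A fuel h p q mid :
  run A (S fuel) (repeat big (S p) ++ mid ++ repeat small (S q)) h =
  let d := A h big small in
  run A fuel (if fst d then repeat big p ++ mid ++ repeat small (S q)
              else repeat big (S p) ++ mid ++ repeat small q)
      (h ++ (chosen d big small, target_bin h d) :: nil).
Proof.
  assert (Hsnoc : big :: repeat big p ++ mid ++ repeat small (S q) =
                  (big :: repeat big p ++ mid ++ repeat small q) ++ small :: nil).
  { change (repeat small (S q)) with (small :: repeat small q).
    now rewrite repeat_cons, <- app_comm_cons, !app_assoc. }
  change (repeat big (S p)) with (big :: repeat big p). rewrite <- !app_comm_cons, run_cons.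
  cbv zeta. rewrite Hsnoc, last_last, removelast_last. destruct fst; reflexivity.
Qed.

Lemma run_after_prefix A n fuel p q mid :
  run A (n + fuel) (repeat big (count_item (prefix A n) big + S p) ++ mid
                    ++ repeat small (count_item (prefix A n) small + S q)) nil =
  run A fuel (repeat big (S p) ++ mid ++ repeat small (S q)) (prefix A n).
Proof.
  revert fuel p q. induction n as [|n IH]; intros fuel p q; [reflexivity|].
  destruct (count_item_prefix_S A n) as [-> ->].
  replace (S n + fuel)%nat with (n + S fuel)%nat by lia.
  cbn [prefix]. set (h := prefix A n) in *. set (d := A h big small) in *.
  destruct (fst d) eqn:Hd.
  - replace (count_item h big + 1 + S p)%nat with (count_item h big + S (S p))%nat by lia.
    rewrite <- plus_n_O, IH, run_prefix_step. cbv zeta. fold d. now rewrite Hd.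
  - replace (count_item h small + 1 + S q)%nat with (count_item h small + S (S q))%nat by lia.
    rewrite <- plus_n_O, IH, run_prefix_step. cbv zeta. fold d. now rewrite Hd.
Qed.

(** * The adversary *)

Definition small_room (b s : nat) : nat := ((20 - (8 * b + 6 * s)) / 6)%nat.
Definition medium_room (b s : nat) : nat := ((20 - (8 * b + 6 * s)) / 7)%nat.

Lemma small_room_spec b s c : (8 * b + 6 * (s + c) <= 20)%nat -> (c <= small_room b s)%nat.
Proof. intros H. unfold small_room. apply Nat.div_le_lower_bound; lia. Qed.

Lemma medium_room_spec b s c : (8 * b + 6 * s + 7 * c <= 20)%nat -> (c <= medium_room b s)%nat.
Proof. intros H. unfold medium_room. apply Nat.div_le_lower_bound; lia. Qed.

(* Adding the ratio conditions of the inputs (a), (b), (c) with weights 1, 2, 1 gives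
   120 K <= 56 x + 30 y + 20 (small rooms) + 15 (medium rooms) + 18, and with weights 1, 0, 1
   (needed when y > 2x+1) it gives 180 K <= 80 x + 38 y + 45 (medium rooms) + 70.  The per-bin
   bounds below carry one more unit on each item, so they refute both as soon as x + y > 70. *)
Lemma room_weight_abc b s : (8 * b + 6 * s <= 20)%nat ->
  (57 * b + 31 * s + 20 * small_room b s + 15 * medium_room b s <= 120)%nat.
Proof.
  intros H. assert (b <= 2)%nat by lia. assert (s <= 3)%nat by lia.
  destruct b as [|[|[|b]]], s as [|[|[|[|s]]]]; cbn; lia.
Qed.

Lemma room_weight_ac b s : (8 * b + 6 * s <= 20)%nat ->
  (81 * b + 39 * s + 45 * medium_room b s <= 180)%nat.
Proof.
  intros H. assert (b <= 2)%nat by lia. assert (s <= 3)%nat by lia.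
  destruct b as [|[|[|b]]], s as [|[|[|[|s]]]]; cbn; lia.
Qed.

Section Adversary.

Variable A : maxmin_alg.
Hypothesis HA : valid_alg A.
Variable T : nat.

Local Notation hT := (prefix A T).
Local Notation n_big := (count_item hT big).
Local Notation n_small := (count_item hT small).
Local Notation K := (nbins hT).
Local Notation small_rooms :=
  (sum_bins K (fun i => small_room (bin_count hT big i) (bin_count hT small i))).
Local Notation medium_rooms :=
  (sum_bins K (fun i => medium_room (bin_count hT big i) (bin_count hT small i))).

Lemma prefix_bin_capacity i : (8 * bin_count hT big i + 6 * bin_count hT small i <= 20)%nat.
Proof.
  enough (Hpos : forall e, In e hT -> 0 <= fst e)
    by (pose proof (bin_capacity hT i Hpos (prefix_load A T HA i)); lia).
  intros e He. destruct (prefix_sizes A T e He) as [-> | ->]; unfold big, small; lra.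
Qed.

Lemma run_continuation r q : exists new,
  ALG A (items (n_big + 1) r (n_small + S q)) = nbins (hT ++ new) /\
  Permutation (map fst new) (items 1 r (S q)) /\ (forall i, load (hT ++ new) i <= 1).
Proof.
  unfold ALG. rewrite length_items.
  replace (n_big + 1 + r + (n_small + S q))%nat with (T + (1 + r + S q))%nat
    by (pose proof (prefix_count A T); lia).
  unfold items at 1. rewrite run_after_prefix.
  destruct (run_packs A HA (1 + r + S q) (items 1 r (S q)) hT) as [new [Hrun Hnew]].
  - rewrite length_items. lia.
  - eapply Forall_impl; [|apply valid_items_items]. intros a Ha; lra.
  - apply prefix_load, HA.
  - exists new. unfold items in Hrun. now rewrite Hrun.
Qed.

Lemma continuation_capacity new r q :
  Permutation (map fst new) (items 1 r (S q)) -> (forall i, load (hT ++ new) i <= 1) ->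
  forall i, (8 * bin_count hT big i + 6 * (bin_count hT small i + bin_count new small i)
             + 7 * bin_count new medium i <= 20)%nat.
Proof.
  intros Hperm Hload i.
  assert (Hpos : forall e, In e (hT ++ new) -> 0 <= fst e).
  { intros e [He|He]%in_app_or.
    - destruct (prefix_sizes A T e He) as [-> | ->]; unfold big, small; lra.
    - apply (in_map fst), (Permutation_in _ Hperm) in He.
      pose proof (valid_items_items 1 r (S q)) as Hb.
      unfold valid_items in Hb. rewrite Forall_forall in Hb.
      specialize (Hb _ He). lra. }
  pose proof (bin_capacity _ i Hpos (Hload i)) as Hcap.
  rewrite !bin_count_app in Hcap. lia.
Qed.

Lemma count_continuation_le (room : nat -> nat -> nat) z new :
  (forall i, (bin_count new z i <= room (bin_count hT big i) (bin_count hT small i))%nat) ->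
  (count_item new z + K * room 0%nat 0%nat
   <= sum_bins K (fun i => room (bin_count hT big i) (bin_count hT small i))
      + nbins (hT ++ new) * room 0%nat 0%nat)%nat.
Proof.
  intros Hroom. set (K' := nbins (hT ++ new)).
  assert (HK : (K <= K')%nat) by (unfold K'; rewrite nbins_app; lia).
  rewrite <- (sum_bins_count new z K')
    by (intros e He; apply nbins_gt, in_or_app; now right).
  pose proof (sum_bins_le K' _ _ (fun i _ => Hroom i)) as Hle.
  rewrite (sum_bins_beyond K K' (fun i => room (bin_count hT big i) (bin_count hT small i))
             (room 0%nat 0%nat) HK) in Hle
    by (intros i Hi; cbv beta; now rewrite !bin_count_beyond by lia).
  rewrite Nat.mul_sub_distr_r in Hle.
  pose proof (Nat.mul_le_mono_r _ _ (room 0%nat 0%nat) HK). lia.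
Qed.

Lemma alg_ge_prefix_bins : (K <= ALG A (items (n_big + 1) 0 (n_small + 1)))%nat.
Proof.
  destruct (run_continuation 0 0) as [new [-> _]]. rewrite nbins_app. lia.
Qed.

Lemma alg_ge_extra_smalls : (n_small <= 2 * n_big + 1)%nat ->
  (2 * n_big + 2 + 3 * K
   <= n_small + small_rooms + 3 * ALG A (items (n_big + 1) 0 (2 * (n_big + 1))))%nat.
Proof.
  intros Hy. set (q := (2 * n_big + 1 - n_small)%nat).
  replace (2 * (n_big + 1))%nat with (n_small + S q)%nat by lia.
  destruct (run_continuation 0 q) as [new [-> [Hperm Hload]]].
  assert (Hroom : forall i, (bin_count new small i
                             <= small_room (bin_count hT big i) (bin_count hT small i))%nat).
  { intros i. apply small_room_spec.
    pose proof (continuation_capacity new 0 q Hperm Hload i). lia. }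
  pose proof (count_continuation_le small_room small new Hroom) as Hcount.
  rewrite (count_item_perm _ _ _ Hperm), count_items_small in Hcount.
  change (small_room 0 0) with 3%nat in Hcount. lia.
Qed.

Lemma alg_ge_mediums :
  (2 * n_small + 2 + 2 * K
   <= medium_rooms + 2 * ALG A (items (n_big + 1) (2 * (n_small + 1)) (n_small + 1)))%nat.
Proof.
  destruct (run_continuation (2 * (n_small + 1)) 0) as [new [-> [Hperm Hload]]].
  assert (Hroom : forall i, (bin_count new medium i
                             <= medium_room (bin_count hT big i) (bin_count hT small i))%nat).
  { intros i. apply medium_room_spec.
    pose proof (continuation_capacity new _ 0 Hperm Hload i). lia. }
  pose proof (count_continuation_le medium_room medium new Hroom) as Hcount.
  rewrite (count_item_perm _ _ _ Hperm), count_items_medium in Hcount.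
  change (medium_room 0 0) with 2%nat in Hcount. lia.
Qed.

Lemma prefix_count_bins z : sum_bins K (bin_count hT z) = count_item hT z.
Proof. apply sum_bins_count. intros e He. now apply nbins_gt. Qed.

Lemma prefix_weight_abc :
  (57 * n_big + 31 * n_small + 20 * small_rooms + 15 * medium_rooms <= 120 * K)%nat.
Proof.
  rewrite <- !prefix_count_bins, <- !sum_bins_scale, <- !sum_bins_add.
  apply sum_bins_le_const. intros i _. apply room_weight_abc, prefix_bin_capacity.
Qed.

Lemma prefix_weight_ac : (81 * n_big + 39 * n_small + 45 * medium_rooms <= 180 * K)%nat.
Proof.
  rewrite <- !prefix_count_bins, <- !sum_bins_scale, <- !sum_bins_add.
  apply sum_bins_le_const. intros i _. apply room_weight_ac, prefix_bin_capacity.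
Qed.

End Adversary.

Theorem theorem4 :
  forall A : maxmin_alg, valid_alg A ->
  forall m : nat, (0 < m)%nat ->
  exists (I : list R) (k : nat),
    valid_items I /\ sorted_input I /\ is_OPT I k /\ (m < k)%nat /\
    INR (ALG A I) > 16 / 15 * (INR k - 1).
Proof.
  intros A HA m _. change (ratio_witness A m).
  set (T := (3 * m + 100)%nat). (* 3m items force OPT > m, and x + y = T > 70 *)
  pose proof (prefix_count A T) as Hxy.
  pose proof (alg_ge_prefix_bins A HA T) as Ha.
  pose proof (alg_ge_extra_smalls A HA T) as Hb.
  pose proof (alg_ge_mediums A HA T) as Hc.
  pose proof (prefix_weight_abc A HA T) as Wabc.
  pose proof (prefix_weight_ac A HA T) as Wac.
  set (x := count_item (prefix A T) big) in *.
  set (y := count_item (prefix A T) small) in *.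
  destruct (feasible_items_mediums (x + 1) (y + 1)) as [nc [Fc Bc]].
  destruct (witness_or_ratio_bound A m _ _ _ _ Fc ltac:(lia)) as [|Rc]; [assumption|].
  destruct (Nat.le_gt_cases y (2 * x + 1)) as [Hyx|Hyx].
  - destruct (feasible_items_few_smalls (x + 1) (y + 1) ltac:(lia)) as [na [Fa Ba]].
    destruct (witness_or_ratio_bound A m _ _ _ _ Fa ltac:(lia)) as [|Ra]; [assumption|].
    destruct (witness_or_ratio_bound A m _ _ _ _ (feasible_items_two_smalls_per_big (x + 1))
                ltac:(lia)) as [|Rb]; [assumption|].
    specialize (Hb Hyx). lia.
  - destruct (feasible_items_many_smalls (x + 1) (y + 1) ltac:(lia)) as [na [Fa Ba]].
    destruct (witness_or_ratio_bound A m _ _ _ _ Fa ltac:(lia)) as [|Ra]; [assumption|].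
    lia.
Qed.
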